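(* Let $n$ be a positive even integer and let $G$ be a $2r$-regular graph ($r\ge1$) of order $m$ with chromatic number $3$, having a proper $3$-coloring such that for each vertex $v$, $N(v)$ can be partitioned into two monochromatic subsets, each of size $r$, of two different colors. Then $\chi_{ld}(G[\overline{K_{n}}]) = 3$.
   Context: All graphs are finite, simple and undirected. For a graph $G=(V,E)$ of order $N$ without isolated vertices, a bijection $f\colon V\to\{1,2,\dots,N\}$ is a local distance antimagic labeling if $w(u)\neq w(v)$ for every edge $uv$, where $w(u)=\sum_{x\in N(u)}f(x)$ and $N(u)$ is the open neighborhood of $u$. $\chi_{ld}(G)$ is the minimum number of distinct weights over all local distance antimagic labelings of $G$. $\overline{K_n}$ is the edgeless graph on $n$ vertices. The lexicographic product $G[H]$ has vertex set $V(G)\times V(H)$, with $(g,h)$ adjacent to $(g',h')$ iff $gg'\in E(G)$, or $g=g'$ and $hh'\in E(H)$. *)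

From mathcomp Require Import all_boot.
Set Implicit Arguments. Unset Strict Implicit. Unset Printing Implicit Defensive.

Definition simple_graph (V : finType) (e : rel V) : Prop :=
  symmetric e /\ irreflexive e.

Definition nbhd (V : finType) (e : rel V) (v : V) : {set V} := [set y | e v y].

Definition regular (V : finType) (e : rel V) (d : nat) : Prop :=
  forall v : V, #|nbhd e v| = d.

Definition no_isolated (V : finType) (e : rel V) : Prop :=
  forall v : V, exists u, e v u.

Definition proper_coloring (V : finType) (e : rel V) (k : nat) (c : V -> 'I_k) : Prop :=
  forall x y, e x y -> c x != c y.

Definition colorable (V : finType) (e : rel V) (k : nat) : Prop :=
  exists c : V -> 'I_k, proper_coloring e c.

Definition chromatic_number_eq (V : finType) (e : rel V) (k : nat) : Prop :=
  colorable e k /\ forall j, j < k -> ~ colorable e j.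

Definition edgeless (n : nat) : rel 'I_n := fun _ _ => false.

Definition lexprod (T U : finType) (e : rel T) (h : rel U) : rel (T * U)%type :=
  fun x y => e x.1 y.1 || ((x.1 == y.1) && h x.2 y.2).

Definition is_labeling (V : finType) (f : V -> nat) : Prop :=
  [/\ forall x, 0 < f x <= #|V|,
      injective f &
      forall k, 0 < k <= #|V| -> exists x, f x = k].

Definition weight (V : finType) (e : rel V) (f : V -> nat) (u : V) : nat :=
  \sum_(x | e u x) f x.

Definition ld_antimagic (V : finType) (e : rel V) (f : V -> nat) : Prop :=
  is_labeling f /\ forall u v, e u v -> weight e f u != weight e f v.

Definition num_weights (V : finType) (e : rel V) (f : V -> nat) : nat :=
  size (undup [seq weight e f u | u <- enum V]).

Definition chi_ld_eq (V : finType) (e : rel V) (k : nat) : Prop :=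
  (exists f, ld_antimagic e f /\ num_weights e f = k) /\
  (forall f, ld_antimagic e f -> k <= num_weights e f).

From mathcomp Require Import all_boot zify.
Set Implicit Arguments. Unset Strict Implicit. Unset Printing Implicit Defensive.

(* Label the copy (u, j) of a vertex u of G by j m + P_j(u) + 1, where every
   P_j is a bijection V -> {0, ..., m-1}.  Take P_0 and P_1 to be the ranks of
   u in the colour-major order of V, ties inside a colour class broken in
   opposite directions, and pair the remaining layers (n is even) as P, m-1-P.
   Then the column sum S(u) = sum_j f(u, j) depends only on the colour of u and
   increases strictly with it.  Since N(v) consists of r vertices of each
   colour other than c(v), every (v, i) has weight r (S_0 + S_1 + S_2 - S_c(v)):
   three values, distinct on adjacent vertices.  Conversely, the weights of any
   local distance antimagic labeling properly colour G[K_n-bar], hence G, so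
   there are at least chi(G) = 3 of them. *)

Lemma colorable_num_weights (V : finType) (e : rel V) (f : V -> nat) :
  (forall u v, e u v -> weight e f u != weight e f v) -> colorable e (num_weights e f).
Proof.
move=> weight_neq; rewrite /num_weights; set s := undup _.
have weight_in u : weight e f u \in s by rewrite mem_undup map_f ?mem_enum.
have index_lt u : index (weight e f u) s < size s by rewrite index_mem.
exists (fun u => Ordinal (index_lt u)) => x y exy.
apply: contra (weight_neq x y exy) => /eqP[] eq_index.
by apply/eqP/(index_inj 0 (weight_in x) (weight_in y)).
Qed.

Lemma colorable_lexprod (T U : finType) (e : rel T) (h : rel U) k :
  0 < #|U| -> colorable (lexprod e h) k -> colorable e k.
Proof.
case/card_gt0P => u0 _ [c proper_c]; exists (fun x => c (x, u0)) => x y exy.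
by apply: proper_c; rewrite /lexprod /= exy.
Qed.

Lemma num_weights_le (V T : finType) (e : rel V) (f : V -> nat) (h : V -> T) (g : T -> nat) :
  (forall u, weight e f u = g (h u)) -> num_weights e f <= #|T|.
Proof.
move=> weightE; rewrite /num_weights cardE -(size_map g).
apply: uniq_leq_size (undup_uniq _) _ => w; rewrite mem_undup => /mapP[u _ ->].
by rewrite weightE map_f ?mem_enum.
Qed.

Definition fiber_sum (T U : finType) (f : T * U -> nat) (t : T) : nat := \sum_(j : U) f (t, j).

Lemma weight_lexprod_edgeless (V : finType) (e : rel V) n (f : V * 'I_n -> nat) v i :
  weight (lexprod e (@edgeless n)) f (v, i) = \sum_(u in nbhd e v) fiber_sum f u.
Proof.
rewrite /weight /fiber_sum (pair_big_dep _ (fun _ _ => true) (fun u j => f (u, j))) /=.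
by apply: eq_big => -[u j] //=; rewrite /lexprod /edgeless /nbhd inE andbT andbF orbF.
Qed.

Lemma factor_through (V T : finType) (c : V -> T) (S : V -> nat) :
  (forall u v, c u = c v -> S u = S v) -> exists g : T -> nat, forall u, S u = g (c u).
Proof.
move=> S_const; exists (fun t => if [pick u | c u == t] is Some u then S u else 0) => u.
by case: pickP => [v /eqP cv | /(_ u)]; [apply: S_const | rewrite eqxx].
Qed.

Lemma labeling_of_injective (V : finType) (f : V -> nat) :
  injective f -> (forall x, 0 < f x <= #|V|) -> is_labeling f.
Proof.
move=> f_inj f_bnd; split=> // k /andP[k_gt0 k_le].
have pred_lt x : (f x).-1 < #|V| by case/andP: (f_bnd x) => ? ?; lia.
pose g x := Ordinal (pred_lt x).
have g_inj : injective g.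
  move=> x y /(congr1 val) /= fxy; apply: f_inj.
  by case/andP: (f_bnd x) => ? _; case/andP: (f_bnd y) => ? _; lia.
have k_lt : k.-1 < #|V| by lia.
have /codomP[x /(congr1 val) /= kx] := inj_card_onto g_inj (eq_leq (card_ord _)) (Ordinal k_lt).
by exists x; case/andP: (f_bnd x) => ? ?; lia.
Qed.

Lemma mulnD_eq_small (p q x y d : nat) : p * d + x = q * d + y -> x < d -> y < d -> x = y.
Proof. by move=> e xd yd; have := congr1 (modn^~ d) e; rewrite /= !modnMDl !modn_small. Qed.

Lemma ltn_lex (p q x y d : nat) : x < d -> y < d ->
  (p * d + x < q * d + y) = (p < q) || (p == q) && (x < y).
Proof. by move=> xd yd; case: (ltngtP p q) => [pq|qp|->] /=; [nia|nia|rewrite ltn_add2l]. Qed.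

Section Layered.
Variables (V : finType) (P : nat -> V -> nat) (n : nat).
Hypotheses (P_lt : forall j u, P j u < #|V|) (P_inj : forall j, injective (P j)).

Definition layered (x : V * 'I_n) : nat := x.2 * #|V| + P x.2 x.1 + 1.

Lemma layered_inj : injective layered.
Proof.
move=> [u j] [v k]; rewrite /layered /= => /addIn eq_lab.
have eq_P := mulnD_eq_small eq_lab (P_lt j u) (P_lt k v).
have m_gt0 : 0 < #|V| := leq_ltn_trans (leq0n _) (P_lt j u).
move: eq_lab; rewrite eq_P => /addIn /eqP; rewrite eqn_pmul2r // => /eqP /val_inj jk.
by subst k; rewrite (P_inj eq_P).
Qed.

Lemma layered_labeling : is_labeling layered.
Proof.
apply: labeling_of_injective layered_inj _ => -[u j].
rewrite card_prod card_ord /layered addn1 /=.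
apply: leq_trans (_ : j.+1 * #|V| <= #|V| * n); last by rewrite mulnC leq_mul2l ltn_ord orbT.
by rewrite mulSn addnC ltn_add2r.
Qed.

Lemma fiber_sum_layered u :
  fiber_sum layered u = \sum_(j < n) (j * #|V| + 1) + \sum_(j < n) P j u.
Proof. by rewrite /fiber_sum -big_split /=; apply: eq_bigr => j _; rewrite /layered addnAC. Qed.

End Layered.

Section Rank.
Variables (V : finType) (key : V -> nat).

Definition rank (u : V) : nat := #|[set w | key w < key u]|.

Lemma rank_sum u : rank u = \sum_w (key w < key u).
Proof. by rewrite /rank -sum1_card big_mkcond; apply: eq_bigr => w _; rewrite inE; case: ltnP. Qed.

Lemma rank_lt_card u : rank u < #|V|.
Proof.
rewrite /rank -cardsT; apply: proper_card; rewrite properE subsetT /=.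
by apply/subsetPn; exists u; rewrite ?inE ?ltnn.
Qed.

Lemma rank_lt u v : key u < key v -> rank u < rank v.
Proof.
move=> lt_uv; apply: proper_card; rewrite properE; apply/andP; split.
  by apply/subsetP => w; rewrite !inE => /ltn_trans->.
by apply/subsetPn; exists u; rewrite !inE ?lt_uv ?ltnn.
Qed.

Lemma rank_inj : injective key -> injective rank.
Proof.
move=> key_inj u v ruv; apply: key_inj.
by case: (ltngtP (key u) (key v)) => // /rank_lt; rewrite ruv ltnn.
Qed.

End Rank.

Section ColorMajorRanks.
Variables (V : finType) (col : V -> nat).
Let m := #|V|.

Definition up_key (u : V) : nat := col u * m + enum_rank u.
Definition down_key (u : V) : nat := col u * m + (m.-1 - enum_rank u).

Let enum_rank_lt (w : V) : enum_rank w < m := ltn_ord _.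
Let rank_lt_m (key : V -> nat) (u : V) : rank key u < m := rank_lt_card key u.

Lemma up_key_inj : injective up_key.
Proof. by move=> u v /mulnD_eq_small eq_rank; apply/enum_rank_inj/ord_inj/eq_rank. Qed.

Lemma down_key_inj : injective down_key.
Proof.
move=> u v /mulnD_eq_small eq_rank; apply/enum_rank_inj/ord_inj.
by move: eq_rank (enum_rank_lt u) (enum_rank_lt v); lia.
Qed.

Lemma up_down_key_lt w u : w != u ->
  (up_key w < up_key u) + (down_key w < down_key u) = 2 * (col w < col u) + (col w == col u).
Proof.
move=> neq_wu; have lt_w := enum_rank_lt w; have lt_u := enum_rank_lt u.
have neq_rank : enum_rank w != enum_rank u by apply: contra neq_wu => /eqP/enum_rank_inj->.
rewrite /up_key /down_key !ltn_lex //; try lia.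
have -> : (m.-1 - enum_rank w < m.-1 - enum_rank u) = (enum_rank u < enum_rank w) by lia.
move: neq_rank; rewrite -val_eqE /=.
by case: ltngtP => //= _; case: ltngtP.
Qed.

Definition class_weight (x : nat) : nat := \sum_w (2 * (col w < x) + (col w == x)).

Lemma rank_up_down u : rank up_key u + rank down_key u + 1 = class_weight (col u).
Proof.
have -> : 1 = \sum_w (w == u) by rewrite (bigD1 u) //= eqxx big1 // => w /negbTE->.
rewrite !rank_sum -!big_split /=; apply: eq_bigr => w _.
case: (eqVneq w u) => [->|neq_wu]; first by rewrite !ltnn eqxx.
by rewrite addn0 up_down_key_lt.
Qed.

Lemma class_weight_lt u y : col u < y -> class_weight (col u) < class_weight y.
Proof.
move=> lt_uy; rewrite /class_weight (bigD1 u) // [X in _ < X](bigD1 u) //= ltnn eqxx lt_uy.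
rewrite (ltn_eqF lt_uy) -addSn leq_add //; apply: leq_sum => w _.
by case: (ltngtP (col w) (col u)) => [||->]; case: (ltngtP (col w) y) => //=; lia.
Qed.

(* Layers 0 and 1 break ties inside a colour class in opposite directions;
   layers 2i and 2i+1 (i >= 1) sum to m - 1. *)
Definition layer (j : nat) (u : V) : nat :=
  if j == 1 then rank down_key u
  else if odd j then m.-1 - rank up_key u else rank up_key u.

Lemma layer_lt j u : layer j u < m.
Proof.
have := rank_lt_m up_key u; have := rank_lt_m down_key u.
by rewrite /layer; case: ifP => _ //; case: ifP => _ //; lia.
Qed.

Lemma layer_inj j : injective (layer j).
Proof.
have up_inj := rank_inj up_key_inj; have down_inj := rank_inj down_key_inj.
move=> u v; rewrite /layer; case: ifP => _; first exact: down_inj.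
case: ifP => _; last exact: up_inj.
move=> eq_layer; apply: up_inj.
by move: eq_layer (rank_lt_m up_key u) (rank_lt_m up_key v); lia.
Qed.

Lemma sum_layer k u :
  \sum_(j < k.*2.+2) layer j u = rank up_key u + rank down_key u + k * m.-1.
Proof.
elim: k => [|k IH]; first by rewrite !big_ord_recr big_ord0 /layer /=; lia.
rewrite doubleS 2!big_ord_recr /= IH /layer /= odd_double /=.
by have := rank_lt_m up_key u; rewrite mulSn; lia.
Qed.

Lemma fiber_sum_layer k u :
  fiber_sum (layered layer (n := k.*2.+2)) u + 1
  = \sum_(j < k.*2.+2) (j * m + 1) + k * m.-1 + class_weight (col u).
Proof. by rewrite fiber_sum_layered sum_layer -rank_up_down -/m; lia. Qed.

Lemma fiber_sum_layer_eq k u v :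
  (fiber_sum (layered layer (n := k.*2.+2)) u == fiber_sum (layered layer (n := k.*2.+2)) v)
  = (col u == col v).
Proof.
apply/eqP/eqP => [eq_sum | eq_col]; last by apply/(@addIn 1); rewrite !fiber_sum_layer eq_col.
move/(congr1 (addn^~ 1)): eq_sum; rewrite /= !fiber_sum_layer => /addnI eq_w.
by case: (ltngtP (col u) (col v)) => // /class_weight_lt; rewrite eq_w ltnn.
Qed.

End ColorMajorRanks.

Lemma sum_ord3_distinct (g : 'I_3 -> nat) (a b d : 'I_3) :
  a != b -> a != d -> b != d -> g a + g b + g d = \sum_k g k.
Proof.
move=> ab ad bd.
have abd : a |: (b |: [set d]) = [set: 'I_3].
  apply/eqP; rewrite eqEcard subsetT cardsT card_ord !cardsU1 cards1 !inE.
  by rewrite (negbTE ab) (negbTE ad) (negbTE bd).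
have -> : \sum_k g k = \sum_(k in a |: (b |: [set d])) g k.
  by apply: eq_bigl => k; rewrite abd in_setT.
by rewrite !big_setU1 ?big_set1 /= ?addnA ?inE ?negb_or ?ab ?ad ?bd.
Qed.

Lemma sum_nbhd_two_colors (V : finType) (e : rel V) (c : V -> 'I_3) (g : 'I_3 -> nat)
    (r : nat) (v : V) (A B : {set V}) (a b : 'I_3) :
  proper_coloring e c -> 0 < r ->
  [/\ A :|: B = nbhd e v, [disjoint A & B], #|A| = r & #|B| = r] ->
  [/\ a != b, {in A, forall y, c y = a} & {in B, forall y, c y = b}] ->
  \sum_(u in nbhd e v) g (c u) + r * g (c v) = r * \sum_k g k.
Proof.
move=> proper_c r_gt0 [AB_N dis_AB card_A card_B] [ab cA cB].
have color_neq (X : {set V}) (x : 'I_3) :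
    #|X| = r -> X \subset A :|: B -> {in X, forall y, c y = x} -> x != c v.
  move=> card_X sub_X cX; have /card_gt0P[y yX] : 0 < #|X| by rewrite card_X.
  have := subsetP sub_X y yX; rewrite AB_N inE => evy.
  by rewrite -(cX y yX) eq_sym proper_c.
have sum_class (X : {set V}) (x : 'I_3) :
    #|X| = r -> {in X, forall y, c y = x} -> \sum_(u in X) g (c u) = r * g x.
  by move=> card_X cX; rewrite (eq_bigr _ (fun u uX => congr1 g (cX u uX))) sum_nat_const card_X.
have -> : \sum_(u in nbhd e v) g (c u) = \sum_(u in [predU A & B]) g (c u).
  by apply: eq_bigl => u; rewrite -AB_N inE.
rewrite bigU // (sum_class A a) // (sum_class B b) //.
rewrite -(sum_ord3_distinct g ab (color_neq A a _ _ _) (color_neq B b _ _ _)) ?subsetUl ?subsetUr //.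
by rewrite !mulnDr.
Qed.

Theorem mainTheorem12 (V : finType) (e : rel V) (n r m : nat) :
  0 < n -> ~~ odd n ->
  simple_graph e ->
  1 <= r ->
  regular e (2 * r) ->
  #|V| = m ->
  chromatic_number_eq e 3 ->
  (exists c : V -> 'I_3,
     proper_coloring e c /\
     forall v : V, exists (A B : {set V}) (a b : 'I_3),
       [/\ A :|: B = nbhd e v, [disjoint A & B], #|A| = r & #|B| = r] /\
       [/\ a != b, {in A, forall y, c y = a} & {in B, forall y, c y = b}]) ->
  chi_ld_eq (lexprod e (@edgeless n)) 3.
Proof.
move=> n_gt0 n_even _ r_gt0 _ _ [_ not_colorable] [c [proper_c split_nbhd]].
have [k ->] : exists k, n = k.*2.+2.
  exists (n./2).-1; rewrite -doubleS prednK ?even_halfK //.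
  by rewrite -double_gt0 even_halfK.
set G := lexprod e (@edgeless _).
pose col u := nat_of_ord (c u); pose f := layered (layer col) (n := k.*2.+2).
have [g fiberE] : exists g, forall u, fiber_sum f u = g (c u).
  by apply: factor_through => u v cuv; apply/eqP; rewrite fiber_sum_layer_eq /col cuv.
have weightE v i : weight G f (v, i) + r * g (c v) = r * \sum_t g t.
  have [A [B [a [b [splitAB colorAB]]]]] := split_nbhd v.
  rewrite weight_lexprod_edgeless (eq_bigr _ (fun u _ => fiberE u)).
  exact: sum_nbhd_two_colors splitAB colorAB.
have three_le f' : ld_antimagic G f' -> 3 <= num_weights G f'.
  move=> [_ weight_neq]; rewrite leqNgt; apply/negP => lt3; apply: (not_colorable _ lt3).
  by apply: colorable_lexprod (colorable_num_weights weight_neq); rewrite card_ord.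
have f_antimagic : ld_antimagic G f.
  split; first exact/layered_labeling/layer_inj/layer_lt.
  move=> [x i] [y j]; rewrite /G /lexprod /edgeless /= andbF orbF => exy.
  apply: contraNneq (proper_c x y exy) => eq_weight; apply/eqP/val_inj.
  have /eqP : r * g (c x) = r * g (c y).
    by apply: (@addnI (weight G f (x, i))); rewrite {2}eq_weight !weightE.
  by rewrite eqn_pmul2l // -!fiberE fiber_sum_layer_eq => /eqP.
split=> [|f' /three_le //]; exists f; split=> //.
apply/eqP; rewrite eqn_leq three_le // andbT -[3]card_ord.
apply: (num_weights_le (h := fun x => c x.1) (g := fun t => r * \sum_t g t - r * g t)).
by move=> -[v i]; rewrite -(weightE v i) addnK.
Qed.
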